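(* Let $G$, $H$, $K$ be impartial games. Then $(G\circ H)\circ K = G\circ (H+K)$, where $=$ denotes equality of games (equivalently, $(G\circ H)\circ K + G\circ(H+K)$ is a $\mathcal{P}$-position).
   Context: All games are finite (short) impartial games under normal play. A game is identified with its set of options; $\mathbf{E}$ denotes the game with no options, and $\equiv$ denotes identity of games (same set of options, recursively). The disjunctive sum is the game $G+H \equiv \{g+H,\ G+h\}$ ($g$ ranging over options of $G$, $h$ over options of $H$), so $\mathbf{E}+\mathbf{E}\equiv\mathbf{E}$. A $\mathcal{P}$-position is a game all of whose options are $\mathcal{N}$-positions; an $\mathcal{N}$-position has some option that is a $\mathcal{P}$-position. Two games are equal, $G=H$, if $G+X$ and $H+X$ have the same outcome ($\mathcal{P}$ or $\mathcal{N}$) for every game $X$; for impartial games this holds iff $G+H$ is a $\mathcal{P}$-position. The split sum is defined recursively by: $G\circ H \equiv \mathbf{E}$ if $G\equiv \mathbf{E}$; $G\circ H\equiv G$ if $H\equiv\mathbf{E}$ (and $G\not\equiv\mathbf{E}$); otherwise $G\circ H \equiv \{G\circ h,\ g\circ H\}$. *)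

From Stdlib Require Import List Bool.
Import ListNotations.

(* A game is given by its (finite) list of options.  Identity of games
   (same set of options, recursively) is not needed for the statement:
   all notions below (outcome, sums, equality) respect it. *)
Inductive game : Type := Game : list game -> game.

Definition E : game := Game [].

Definition options (G : game) : list game := match G with Game gs => gs end.

Fixpoint add (G : game) : game -> game :=
  match G with
  | Game gs =>
      fix addG (H : game) : game :=
        match H with
        | Game hs => Game (map (fun g => add g H) gs ++ map addG hs)
        end
  end.

Fixpoint isP (G : game) : bool :=
  match G with
  | Game gs => forallb (fun g => negb (isP g)) gs
  end.

Definition isN (G : game) : bool := negb (isP G).

Fixpoint ssplit (G : game) : game -> game :=
  match G with
  | Game [] => fun _ => Game []
  | Game gs =>
      fix ssplitG (H : game) : game :=
        match H with
        | Game [] => G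
        | Game hs => Game (map ssplitG hs ++ map (fun g => ssplit g H) gs)
        end
  end.

Definition game_eq (G H : game) : Prop :=
  forall X : game, isP (add G X) = isP (add H X).

From Stdlib Require Import List Bool.
Import ListNotations.

(* The paper's identity (G o H) o K = G o (H + K) in fact holds
   up to *identity* of games, not only up to equality: both sides have, after
   matching, the same options
     (G o H) o k  ~  G o (H + k),   (G o h) o K  ~  G o (h + K),
     (g o H) o K  ~  g o (H + K),
   so the identity follows by induction on (G, H, K), with degenerate cases
   when one of the games is E.  Since games are represented here as lists of
   options, identity is captured by the relation [ident] ("every option of
   one game is identical to some option of the other, and conversely"). *)

(* Structural induction on games, with the hypothesis available for every
   option (the automatically generated principle ignores nested lists). *)
Definition game_ind_in (P : game -> Prop)
  (step : forall gs, (forall g, In g gs -> P g) -> P (Game gs)) :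
  forall G, P G :=
  fix rec G :=
    match G with
    | Game gs =>
        step gs
          ((fix all (l : list game) : forall g, In g l -> P g :=
              match l with
              | [] => fun g Hg => False_ind _ Hg
              | x :: l' => fun g Hg =>
                  match Hg with
                  | or_introl e => eq_ind x P (rec x) g e
                  | or_intror Hg' => all l' g Hg'
                  end
              end) gs)
    end.

Lemma E_or_has_option (G : game) : G = E \/ options G <> [].
Proof. destruct G as [[|g gs]]; [left | right]; easy. Qed.

Lemma in_add_options (G H x : game) :
  In x (options (add G H)) <->
  (exists g, In g (options G) /\ x = add g H) \/
  (exists h, In h (options H) /\ x = add G h).
Proof.
  destruct G as [gs], H as [hs].
  change (options (add (Game gs) (Game hs)))
    with (map (fun g => add g (Game hs)) gs ++ map (add (Game gs)) hs).
  rewrite in_app_iff, !in_map_iff; simpl options.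
  firstorder (subst; eauto).
Qed.

Lemma in_ssplit_options (G H x : game) :
  options G <> [] -> options H <> [] ->
  In x (options (ssplit G H)) <->
  (exists h, In h (options H) /\ x = ssplit G h) \/
  (exists g, In g (options G) /\ x = ssplit g H).
Proof.
  destruct G as [[|g0 gs]]; [now intros [] |].
  destruct H as [[|h0 hs]]; [now intros _ [] |]. intros _ _.
  change (options (ssplit (Game (g0 :: gs)) (Game (h0 :: hs))))
    with (map (ssplit (Game (g0 :: gs))) (h0 :: hs)
          ++ map (fun g => ssplit g (Game (h0 :: hs))) (g0 :: gs)).
  rewrite in_app_iff, !in_map_iff; cbn [options].
  firstorder (subst; eauto).
Qed.

Lemma add_has_option (G H : game) :
  options G <> [] -> options (add G H) <> [].
Proof.
  intros NG Hnil.
  destruct (options G) as [|g gs] eqn:EG; [congruence|].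
  assert (Hin : In (add g H) (options (add G H))).
  { apply in_add_options; left; exists g; rewrite EG; simpl; auto. }
  rewrite Hnil in Hin; contradiction.
Qed.

Lemma ssplit_has_option (G H : game) :
  options G <> [] -> options H <> [] -> options (ssplit G H) <> [].
Proof.
  intros NG NH Hnil.
  destruct (options H) as [|h hs] eqn:EH; [congruence|].
  assert (Hin : In (ssplit G h) (options (ssplit G H))).
  { apply in_ssplit_options; auto; [congruence|].
    left; exists h; rewrite EH; simpl; auto. }
  rewrite Hnil in Hin; contradiction.
Qed.

Lemma ssplit_E_l (X : game) : ssplit E X = E.
Proof. destruct X as [[|x xs]]; reflexivity. Qed.

Lemma ssplit_E_r (X : game) : ssplit X E = X.
Proof. destruct X as [[|x xs]]; reflexivity. Qed.

Lemma add_E_l (X : game) : add E X = X.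
Proof.
  induction X as [xs IH] using game_ind_in.
  change (add E (Game xs)) with (Game (map (add E) xs)).
  f_equal. rewrite <- (map_id xs) at 2. apply map_ext_in, IH.
Qed.

Lemma add_E_r (X : game) : add X E = X.
Proof.
  induction X as [xs IH] using game_ind_in.
  change (add (Game xs) E) with (Game (map (fun x => add x E) xs ++ [])).
  rewrite app_nil_r. f_equal. rewrite <- (map_id xs) at 2. apply map_ext_in, IH.
Qed.

(* Identity of games: the options correspond, recursively.  (Options are
   given as lists, so [ident] forgets their order and multiplicity.) *)
Inductive ident : game -> game -> Prop :=
| ident_intro (A B : game) :
    (forall a, In a (options A) -> exists b, In b (options B) /\ ident a b) ->
    (forall b, In b (options B) -> exists a, In a (options A) /\ ident a b) ->
    ident A B.

Lemma ident_refl (A : game) : ident A A.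
Proof.
  induction A as [gs IH] using game_ind_in.
  constructor; intros g Hg; exists g; auto.
Qed.

Lemma ident_add_r (A B X : game) : ident A B -> ident (add A X) (add B X).
Proof.
  revert B X; induction A as [gs IHA] using game_ind_in; intros B X HAB.
  induction X as [xs IHX] using game_ind_in.
  inversion HAB as [? ? Hfwd Hbwd]; subst.
  constructor; intros y Hy; apply in_add_options in Hy;
    destruct Hy as [[z [Hz ->]] | [x [Hx ->]]].
  - destruct (Hfwd z Hz) as [b [Hb Hzb]].
    exists (add b (Game xs)); split; [apply in_add_options; eauto | auto].
  - exists (add B x); split; [apply in_add_options; eauto | auto].
  - destruct (Hbwd z Hz) as [a [Ha Haz]].
    exists (add a (Game xs)); split; [apply in_add_options; eauto | auto].
  - exists (add (Game gs) x); split; [apply in_add_options; eauto | auto].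
Qed.

Lemma isP_match (A B : game) :
  (forall a, In a (options A) -> exists b, In b (options B) /\ isP a = isP b) ->
  (forall b, In b (options B) -> exists a, In a (options A) /\ isP a = isP b) ->
  isP A = isP B.
Proof.
  destruct A as [gs], B as [hs]; simpl options; intros Hfwd Hbwd.
  change (forallb (fun g => negb (isP g)) gs = forallb (fun h => negb (isP h)) hs).
  apply eq_true_iff_eq; rewrite !forallb_forall; split; intros Hall x Hx.
  - destruct (Hbwd x Hx) as [a [Ha <-]]; auto.
  - destruct (Hfwd x Hx) as [b [Hb ->]]; auto.
Qed.

Lemma ident_isP (A B : game) : ident A B -> isP A = isP B.
Proof.
  revert B; induction A as [gs IH] using game_ind_in; intros B HAB.
  inversion HAB as [? ? Hfwd Hbwd]; subst.
  apply isP_match.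
  - intros a Ha; destruct (Hfwd a Ha) as [b [Hb Hab]]; eauto.
  - intros b Hb; destruct (Hbwd b Hb) as [a [Ha Hab]]; eauto.
Qed.

Lemma ssplit_ssplit_ident (G H K : game) :
  ident (ssplit (ssplit G H) K) (ssplit G (add H K)).
Proof.
  revert H K; induction G as [gs IHG] using game_ind_in; intros H.
  induction H as [hs IHH] using game_ind_in; intros K.
  induction K as [ks IHK] using game_ind_in.
  destruct (E_or_has_option (Game gs)) as [EG | NG].
  { rewrite EG, !ssplit_E_l. apply ident_refl. }
  destruct (E_or_has_option (Game hs)) as [EH | NH].
  { rewrite EH, ssplit_E_r, add_E_l. apply ident_refl. }
  destruct (E_or_has_option (Game ks)) as [EK | NK].
  { rewrite EK, ssplit_E_r, add_E_r. apply ident_refl. }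
  pose proof (ssplit_has_option _ _ NG NH) as NGH.
  pose proof (add_has_option _ (Game ks) NH) as NHK.
  constructor; intros x Hx.
  - apply in_ssplit_options in Hx; auto.
    destruct Hx as [[k [Hk ->]] | [y [Hy ->]]].
    +
      exists (ssplit (Game gs) (add (Game hs) k)); split; [|apply IHK; auto].
      apply in_ssplit_options; auto; left; eexists; split; [|reflexivity].
      apply in_add_options; eauto.
    + apply in_ssplit_options in Hy; auto.
      destruct Hy as [[h [Hh ->]] | [g [Hg ->]]].
      *
        exists (ssplit (Game gs) (add h (Game ks))); split; [|apply IHH; auto].
        apply in_ssplit_options; auto; left; eexists; split; [|reflexivity].
        apply in_add_options; eauto.
      *
        exists (ssplit g (add (Game hs) (Game ks))); split; [|apply IHG; auto].
        apply in_ssplit_options; eauto.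
  - apply in_ssplit_options in Hx; auto.
    destruct Hx as [[y [Hy ->]] | [g [Hg ->]]].
    + apply in_add_options in Hy.
      destruct Hy as [[h [Hh ->]] | [k [Hk ->]]].
      * exists (ssplit (ssplit (Game gs) h) (Game ks)); split; [|apply IHH; auto].
        apply in_ssplit_options; auto; right; eexists; split; [|reflexivity].
        apply in_ssplit_options; eauto.
      * exists (ssplit (ssplit (Game gs) (Game hs)) k); split; [|apply IHK; auto].
        apply in_ssplit_options; eauto.
    + exists (ssplit (ssplit g (Game hs)) (Game ks)); split; [|apply IHG; auto].
      apply in_ssplit_options; auto; right; eexists; split; [|reflexivity].
      apply in_ssplit_options; eauto.
Qed.

Theorem theorem2p4 (G H K : game) :
  game_eq (ssplit (ssplit G H) K) (ssplit G (add H K)).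
Proof.
  intros X. apply ident_isP, ident_add_r, ssplit_ssplit_ident.
Qed.
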